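(* Let $n,k,\delta,\alpha$ be positive integers with $1\le\delta\le k$, $\delta+k\le n$ and $\alpha\ge2$. Then $$\mathcal B_q(n,k,\delta;\alpha)\ge(\alpha-1)\,q^{\max\{k,n-k\}(\min\{k,n-k\}-\delta+1)}.$$
   Context: An $\alpha$-$(n,k,\delta)_q^c$ covering Grassmannian code is a finite multiset of $k$-dimensional subspaces of $\mathbb F_q^n$ such that any $\alpha$ of its elements (taken with distinct indices) span a subspace of dimension at least $k+\delta$. $\mathcal B_q(n,k,\delta;\alpha)$ denotes the maximum size of such a code. *)

From HB Require Import structures.
From mathcomp Require Import all_boot all_order all_algebra all_field.
Set Implicit Arguments. Unset Strict Implicit. Unset Printing Implicit Defensive.
Import GRing.Theory.
Local Open Scope ring_scope.

(* A finite multiset of k-dimensional subspaces of F^n, given as an indexed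
   family C : 'I_m -> {vspace 'rV[F]_n}, is an alpha-(n,k,delta)_q^c covering
   Grassmannian code if every member has dimension k and any alpha members
   with pairwise distinct indices span a subspace of dimension >= k + delta. *)
Definition covering_grassmannian_code (F : fieldType) (n k delta alpha m : nat)
  (C : 'I_m -> {vspace 'rV[F]_n}) : Prop :=
  (forall i, \dim (C i) = k) /\
  (forall f : 'I_alpha -> 'I_m, injective f ->
     (k + delta <= \dim (\sum_(j < alpha) C (f j))%VS)%N).
Arguments covering_grassmannian_code F n k delta alpha m C : clear implicits.

From HB Require Import structures.
From mathcomp Require Import all_boot all_order all_algebra all_field.
From mathcomp Require Import all_fingroup all_solvable zify.
Set Implicit Arguments. Unset Strict Implicit. Unset Printing Implicit Defensive.
Import GRing.Theory.
Local Open Scope ring_scope.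

(* Let L = GF(q^b) with b = max(k, l), l = n - k, embed F^k into L and project
   L onto F^l. Each q-linearized polynomial x |-> sum_(i < t) c_i x^(q^i) with
   t = min(k, l) - delta + 1 then induces a linear map h_c : F^k -> F^l, whose
   graph is a k-dimensional subspace of F^(k+l). A nonzero linearized polynomial
   of q-degree < t has at most q^(t-1) roots and its roots form an F-space, so
   ker (h_c - h_d) has dimension at most (t - 1) + (b - l) = k - delta; hence
   two distinct graphs meet in dimension at most k - delta and span at least
   k + delta. Taking each of the q^(bt) graphs alpha - 1 times, any alpha
   members contain two distinct graphs. *)

Lemma card_finvect (F : finFieldType) (vT : vectType F) :
  #|finvect_type vT| = (#|F| ^ \dim {:vT})%N.
Proof.
rewrite -(card_vspace (fullv : {vspace finvect_type vT})).
by apply: eq_card => v; rewrite memvf.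
Qed.

Lemma vspace_enum (F : finFieldType) (vT : vectType F) (V : {vspace vT}) :
  exists2 s : seq vT, uniq s /\ s =i V & size s = (#|F| ^ \dim V)%N.
Proof.
(* {vspace vT} and {vspace finvect_type vT} are convertible only once vT is a
   constructor application. *)
case: vT V => T cT V; pose V' : {vspace finvect_type (Vector.Pack cT)} := V.
exists (enum V'); last by rewrite -(card_vspace V') cardE.
by split=> [|x]; [apply: enum_uniq | rewrite (@mem_enum (finvect_type (Vector.Pack cT)))].
Qed.

Lemma lfun_retraction_exists (K : fieldType) (U V : vectType K) :
  (\dim {:U} <= \dim {:V})%N ->
  exists (f : 'Hom(U, V)) (g : 'Hom(V, U)), (g \o f = \1)%VF.
Proof.
move=> leUV; have basisU := vbasisP {:U}; have basisV := vbasisP {:V}.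
pose P m n : 'M[K]_(m, n) := pid_mx (\dim {:U}).
exists (passmx.hommx (vbasis {:U}) (vbasis {:V}) (P _ _)).
exists (passmx.hommx (vbasis {:V}) (vbasis {:U}) (P _ _)).
by rewrite -passmx.hommx_mul // pid_mx_id // pid_mx_1 passmx.hommx1.
Qed.

Lemma lker_retraction (K : fieldType) (U V : vectType K)
    (f : 'Hom(U, V)) (g : 'Hom(V, U)) :
  (g \o f = \1)%VF -> lker f = 0%VS.
Proof.
move=> gfK; apply/eqP/lker0P => u v /(congr1 g).
by rewrite -!comp_lfunE gfK !id_lfunE.
Qed.

Lemma dim_lker_section (K : fieldType) (U V : vectType K)
    (f : 'Hom(U, V)) (g : 'Hom(V, U)) :
  (g \o f = \1)%VF -> \dim (lker g) = (\dim {:V} - \dim {:U})%N.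
Proof.
move=> gfK; have := limg_ker_dim g fullv; rewrite capfv.
suff ->: (g @: fullv)%VS = fullv by move=> <-; rewrite addnK.
apply/vspaceP => u; rewrite memvf -[u]id_lfunE -gfK comp_lfunE.
by rewrite memv_img ?memvf.
Qed.

Lemma dim_lker_comp (K : fieldType) (U V W : vectType K)
    (f : 'Hom(U, V)) (g : 'Hom(V, W)) :
  (\dim (lker (g \o f)%VF) <= \dim (lker f) + \dim (lker g))%N.
Proof.
rewrite -(limg_ker_dim f (lker (g \o f))) capvC.
apply: leq_add; first by exact/dimvS/capvSl.
by apply/dimvS; rewrite lkerE -limg_comp -lkerE.
Qed.

Lemma dim_lker_sandwich (K : fieldType) (U V W : vectType K) (phi : 'Hom(U, V))
    (phi' : 'Hom(V, U)) (g : 'End(V)) (psi' : 'Hom(W, V)) (psi : 'Hom(V, W)) :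
  (phi' \o phi = \1)%VF -> (psi \o psi' = \1)%VF ->
  (\dim (lker (psi \o g \o phi)%VF) <= \dim (lker g) + (\dim {:V} - \dim {:W}))%N.
Proof.
move=> phiK psiK; rewrite -(dim_lker_section psiK).
apply: leq_trans (dim_lker_comp _ _) _; rewrite (lker_retraction phiK) dimv0.
exact: dim_lker_comp.
Qed.

Lemma natr_card_finField (F : finFieldType) : (#|F|%:R : F) = 0.
Proof.
by have := @expg_cardG _ [set: F] 1%R (in_setT _); rewrite FinRing.zmodXgE cardsT.
Qed.

Lemma frobenius_lfun_exists (F : finFieldType) (L : splittingFieldType F) :
  exists frob : 'End(L), forall x, frob x = x ^+ #|F|.
Proof.
have [a _ Da] := finField_galois_generator (sub1v {:L}).
by exists (gal_repr a) => x; rewrite Da ?memvf // dimv1 expn1.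
Qed.

Lemma finField_ext_exists (F : finFieldType) b :
  (0 < b)%N -> {L : splittingFieldType F | \dim {:L} = b}.
Proof.
move=> b_gt0; set q := #|F|; have q_gt1 : (1 < q)%N := finNzRing_gt1 F.
pose m := (q ^ b)%N; have m_gt1 : (1 < m)%N by rewrite -(expn0 q) ltn_exp2l.
pose P : {poly F} := 'X^m - 'X.
have size_P : size P = m.+1 by rewrite size_polyDl size_polyXn ?size_polyN ?size_polyX.
have sep_P : separable_poly P.
  rewrite unlock /separable_poly derivB derivXn derivX -mulr_natl -polyC_natr /m natrX.
  rewrite (natr_card_finField F) expr0n gtn_eqF // polyC0 mul0r sub0r -scaleN1r.
  by rewrite coprimepZr ?coprimep1 ?oppr_eq0 ?oner_eq0.
have /FinSplittingFieldFor[/= L splitL] : P != 0 by rewrite -size_poly_gt0 size_P.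
exists L; have [zs P_zs genL] := splitL.
have uniq_zs : uniq zs by rewrite -separable_prod_XsubC -(eqp_separable P_zs) separable_map.
have size_zs : size zs = m.
  by apply: succn_inj; rewrite -(size_prod_XsubC _ id) -(eqp_size P_zs) size_map_poly.
rewrite [map_poly _ _]rmorphB rmorphXn /= map_polyX in P_zs.
have [a _ Da] := finField_galois_generator (sub1v {:L}).
rewrite dimv1 expn1 in Da.
(* a is the Frobenius x |-> x^q, so the roots of X^m - X are the fixed points
   of a^b, which form a subfield containing the roots that generate L. *)
have zs_fixed : zs =i fixedSpace (a ^+ b)%g.
  move=> z; rewrite -root_prod_XsubC -(eqp_root P_zs) (sameP fixedSpaceP eqP).
  rewrite /root !hornerE subr_eq0 /m; congr (_ == z).
  elim: (b) => [|i IHi]; first by rewrite gal_id.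
  by rewrite expgSr expnSr exprM IHi galM ?Da ?memvf.
have fixed_full : fixedSpace (a ^+ b)%g = fullv.
  apply/eqP; rewrite eqEsubv subvf -genL -[fixedSpace _]subfield_closed agenvS //.
  by rewrite subv_add sub1v; apply/span_subvP => z; rewrite zs_fixed.
apply: (@expnI q q_gt1); rewrite -card_finvect -/m -size_zs.
rewrite -(@card_uniqP (finvect_type L) zs uniq_zs).
by apply: eq_card => x; rewrite zs_fixed fixed_full memvf.
Qed.

Section Linearized.
Variables (F : finFieldType) (L : fieldExtType F) (frob : 'End(L)).
Hypothesis frobE : forall x, frob x = x ^+ #|F|.

Definition linearized t (c : 'I_t -> L) : 'End(L) :=
  \sum_(i < t) (amull (c i) \o iter i (comp_lfun frob) \1)%VF.

Lemma linearizedE t (c : 'I_t -> L) x :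
  linearized c x = \sum_(i < t) c i * x ^+ (#|F| ^ i).
Proof.
rewrite sum_lfunE; apply: eq_bigr => i _; rewrite comp_lfunE lfunE /=; congr (_ * _).
elim: (nat_of_ord i) => [|j IHj] /=; first by rewrite id_lfunE expn0 expr1.
by rewrite comp_lfunE IHj frobE expnSr exprM.
Qed.

Lemma linearizedB t (c d : 'I_t -> L) :
  (linearized c - linearized d = linearized (fun i => c i - d i))%R.
Proof.
apply/lfunP => x; rewrite add_lfunE opp_lfunE !linearizedE -sumrB.
by apply: eq_bigr => i _; rewrite mulrBl.
Qed.

Lemma dim_lker_linearized t (c : 'I_t -> L) j :
  c j != 0 -> (\dim (lker (linearized c)) <= t.-1)%N.
Proof.
move=> cj_neq0; set q := #|F|; have q_gt1 : (1 < q)%N := finNzRing_gt1 F.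
pose P : {poly L} := \sum_(i < t) c i *: 'X^(q ^ i).
have coefP m : P`_m = \sum_(i < t | (q ^ i)%N == m) c i by rewrite coef_sumMXn.
have P_neq0 : P != 0.
  apply: contraNneq cj_neq0 => /(congr1 (fun p : {poly L} => p`_(q ^ j))).
  rewrite coefP coef0 (big_pred1 j) => [/eqP//|i /=].
  by rewrite eqn_exp2l // (inj_eq val_inj).
have size_P : (size P <= (q ^ t.-1).+1)%N.
  apply/leq_sizeP => m lt_m; rewrite coefP big_pred0 // => i.
  apply/negbTE; rewrite neq_ltn (leq_trans _ lt_m) // ltnS leq_exp2l //.
  by rewrite -ltnS prednK ?(leq_ltn_trans _ (ltn_ord i)).
have [s [uniq_s mem_s] size_s] := vspace_enum (lker (linearized c)).
have hornerP x : P.[x] = linearized c x.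
  by rewrite linearizedE horner_sum; apply: eq_bigr => i _; rewrite hornerZ hornerXn.
have roots_s : all (root P) s by apply/allP => x; rewrite mem_s memv_ker /root hornerP.
have := leq_trans (max_poly_roots P_neq0 roots_s uniq_s) size_P.
by rewrite size_s ltnS leq_exp2l.
Qed.

Lemma dim_lker_linearizedB t (c d : 'I_t -> L) j :
  c j != d j -> (\dim (lker (linearized c - linearized d)%R) <= t.-1)%N.
Proof. by rewrite linearizedB -subr_eq0; apply: dim_lker_linearized. Qed.
End Linearized.

Section Graph.
Variables (F : fieldType) (k l : nat).
Implicit Types h : 'Hom('rV[F]_k, 'rV[F]_l).

Definition graph_lfun h : 'Hom('rV[F]_k, 'rV[F]_(k + l)) :=
  (linfun (mulmxr (row_mx 1%:M 0)) + (linfun (mulmxr (row_mx 0 1%:M)) \o h))%VF.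

Lemma graph_lfunE h u : graph_lfun h u = row_mx u (h u).
Proof.
rewrite add_lfunE comp_lfunE !lfunE /= !mul_mx_row !mulmx1 !mulmx0.
by rewrite add_row_mx addr0 add0r.
Qed.

Definition graph h := (graph_lfun h @: fullv)%VS.

Lemma dim_graph h : \dim (graph h) = k.
Proof.
rewrite limg_dim_eq ?dimvf /dim /= ?mul1n // capfv.
by apply/eqP/lker0P => u v; rewrite !graph_lfunE => /eq_row_mx[].
Qed.

Lemma dim_graph_cap h1 h2 :
  (\dim (graph h1 :&: graph h2) <= \dim (lker (h1 - h2)%R))%N.
Proof.
rewrite -(limg_ker_dim (graph_lfun h1) (lker (h1 - h2)%R)).
rewrite (leq_trans _ (leq_addl _ _)) //.
apply/dimvS/subvP => w /memv_capP[/memv_imgP[u _ ->] /memv_imgP[v _]].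
rewrite !graph_lfunE => /eq_row_mx[<- h12u]; rewrite -graph_lfunE memv_img //.
by rewrite memv_ker add_lfunE opp_lfunE h12u subrr.
Qed.

Lemma leq_dim_graph_sum delta h1 h2 :
  (\dim (lker (h1 - h2)%R) <= k - delta)%N -> (delta <= k)%N ->
  (k + delta <= \dim (graph h1 + graph h2))%N.
Proof.
move=> /(leq_trans (dim_graph_cap h1 h2)) cap_le le_delta_k.
have := dimv_sum_cap (graph h1) (graph h2); rewrite !dim_graph.
by move: cap_le; lia.
Qed.
End Graph.

Lemma exists_divn_neq d alpha m (f : 'I_alpha -> 'I_m) :
  (0 < d < alpha)%N -> injective f -> exists j1 j2, (f j1 %/ d != f j2 %/ d)%N.
Proof.
case/andP=> d_gt0 lt_d_alpha injf.
have [/existsP[j1 /existsP[j2 neq_div]]|/existsPn same_div] :=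
  boolP [exists j1, exists j2, (f j1 %/ d != f j2 %/ d)%N]; first by exists j1, j2.
suff /leq_card : injective (fun j => Ordinal (ltn_pmod (f j) d_gt0)).
  by rewrite !card_ord leqNgt lt_d_alpha.
move=> i j /(congr1 val) /= eq_mod; apply/injf/val_inj.
have /existsPn/(_ j) := same_div i; rewrite negbK => /eqP eq_div.
by rewrite [LHS](divn_eq _ d) [RHS](divn_eq _ d) eq_div eq_mod.
Qed.

Lemma covering_code_repeat (F : fieldType) (n k delta alpha : nat) (T : finType)
    (V : T -> {vspace 'rV[F]_n}) :
  (2 <= alpha)%N -> (forall c, \dim (V c) = k) ->
  (forall c d, c != d -> (k + delta <= \dim (V c + V d))%N) ->
  exists C : 'I_((alpha - 1) * #|T|) -> {vspace 'rV[F]_n},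
    covering_grassmannian_code F n k delta alpha _ C.
Proof.
move=> alpha_ge2 dimV dimV2; have d_gt0 : (0 < alpha - 1)%N by rewrite subn_gt0.
have block_lt (i : 'I_((alpha - 1) * #|T|)) : (i %/ (alpha - 1) < #|T|)%N.
  by rewrite ltn_divLR // [(#|T| * _)%N]mulnC.
pose block i := enum_val (Ordinal (block_lt i)).
exists (fun i => V (block i)); split=> [i|f injf]; first exact: dimV.
have [|j1 [j2 neq_div]] := @exists_divn_neq (alpha - 1) _ _ _ _ injf.
  by rewrite d_gt0 ltn_subrL (ltnW alpha_ge2).
have neq_block : block (f j1) != block (f j2).
  by apply: contra neq_div => /eqP/enum_val_inj/(congr1 val)/= ->.
apply: leq_trans (dimV2 _ _ neq_block) _.
by apply/dimvS; rewrite subv_add !(sumv_sup _ _ (subvv _)).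
Qed.

Theorem mainTheorem14 (F : finFieldType) (n k delta alpha : nat) :
  (0 < n)%N -> (1 <= delta)%N -> (delta <= k)%N -> (delta + k <= n)%N ->
  (2 <= alpha)%N ->
  exists (m : nat) (C : 'I_m -> {vspace 'rV[F]_n}),
    covering_grassmannian_code F n k delta alpha m C /\
    ((alpha - 1) * #|F| ^ (maxn k (n - k) * (minn k (n - k) - delta + 1)) <= m)%N.
Proof.
move=> _ delta_gt0 le_delta_k le_delta_k_n alpha_ge2.
have /subnKC : (k <= n)%N by lia.
move: (n - k)%N => l Dn; subst n.
set b := maxn k l; set t := (minn k l - delta + 1)%N.
have dim_row m : \dim {:'rV[F]_m} = m by rewrite dimvf /dim /= mul1n.
have [|L dimL] := @finField_ext_exists F b; first by lia.
have [frob frobE] := frobenius_lfun_exists L.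
have [|phi [phi' phiK]] := @lfun_retraction_exists F 'rV[F]_k L.
  by rewrite dim_row dimL leq_maxl.
have [|psi' [psi psiK]] := @lfun_retraction_exists F 'rV[F]_l L.
  by rewrite dim_row dimL leq_maxr.
pose h (c : {ffun 'I_t -> finvect_type L}) := (psi \o linearized frob c \o phi)%VF.
have dim_lker_h c d : c != d -> (\dim (lker (h c - h d)%R) <= k - delta)%N.
  move=> neq_cd; have /existsP[j neq_cdj] : [exists j, c j != d j].
    apply: contraR neq_cd => /existsPn eq_cd.
    by apply/eqP/ffunP => j; apply/eqP/negPn/eq_cd.
  have -> : (h c - h d)%R = (psi \o (linearized frob c - linearized frob d) \o phi)%VF.
    by apply/lfunP => u; rewrite !(add_lfunE, opp_lfunE, comp_lfunE) linearB.
  apply: leq_trans (dim_lker_sandwich _ phiK psiK) _.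
  move: (dim_lker_linearizedB frobE neq_cdj); rewrite dimL dim_row.
  by move: (\dim _) => dim_ker; rewrite /b /t; lia.
have [C codeC] := covering_code_repeat alpha_ge2 (fun c => dim_graph (h c))
  (fun c d neq_cd => leq_dim_graph_sum (dim_lker_h c d neq_cd) le_delta_k).
exists _, C; split => //.
by rewrite card_ffun card_ord card_finvect dimL -expnM.
Qed.
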